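(* Let $R\ge0$ and let $X$ be an $R$-rough geodesic metric space. If $X$ is strongly shortcut then every asymptotic cone of $X$ is strongly shortcut.
   Context: $X$ is $R$-rough geodesic if any $x_1,x_2$ are joined by $f\colon[0,\ell]\to X$, $\ell=d(x_1,x_2)$, $f(0)=x_1,f(\ell)=x_2$, with $|d(f(s),f(t))-|s-t||\le R$. An $R$-circle is a map $\alpha\colon S\to X$ from a Riemannian circle $S$ of length $|S|$ with $d(\alpha(p),\alpha(q))\le d_S(p,q)+R$; for $K>1$ it is $\frac1K$-almost isometric if $d(\alpha(p),\alpha(\bar p))\ge\frac1K\cdot\frac{|S|}2$ for all antipodal $p,\bar p$. An $R$-rough geodesic space is strongly shortcut if for some $K>1$ there is a bound on the lengths of its $\frac1K$-almost isometric $R$-circles (an asymptotic cone of $X$ is a geodesic space, so this applies to it with $R=0$). Asymptotic cone: for a nonprincipal ultrafilter $\mathscr U$ on $\mathbb N$, basepoints $b^{(m)}\in X$ and scalars $s^{(m)}\to\infty$, take sequences $(x_m)$ with $d(x_m,b^{(m)})/s^{(m)}$ bounded, pseudometric $\lim_{\mathscr U}d(x_m,x'_m)/s^{(m)}$, and pass to the metric quotient. *)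

From Stdlib Require Import Reals Lra ClassicalEpsilon.
Open Scope R_scope.

Set Implicit Arguments.

Definition is_metric (X : Type) (d : X -> X -> R) : Prop :=
  (forall x y, 0 <= d x y) /\
  (forall x y, d x y = 0 <-> x = y) /\
  (forall x y, d x y = d y x) /\
  (forall x y z, d x z <= d x y + d y z).

Definition rough_geodesic (X : Type) (d : X -> X -> R) (Rr : R) : Prop :=
  forall x1 x2 : X, exists f : R -> X,
    f 0 = x1 /\ f (d x1 x2) = x2 /\
    forall s t, 0 <= s <= d x1 x2 -> 0 <= t <= d x1 x2 ->
      Rabs (d (f s) (f t) - Rabs (s - t)) <= Rr.

(** The Riemannian circle S of length L is modelled as [0, L) with the
    intrinsic (arc-length) metric. *)
Definition on_circle (L p : R) : Prop := 0 <= p < L.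

Definition circle_dist (L p q : R) : R :=
  Rmin (Rabs (p - q)) (L - Rabs (p - q)).

Definition antipode (L p : R) : R :=
  if Rlt_dec p (L / 2) then p + L / 2 else p - L / 2.

(** alpha : S -> X is an Rr-circle (alpha only matters on [0,L)). *)
Definition is_rough_circle (X : Type) (d : X -> X -> R) (Rr L : R)
  (alpha : R -> X) : Prop :=
  forall p q, on_circle L p -> on_circle L q ->
    d (alpha p) (alpha q) <= circle_dist L p q + Rr.

Definition almost_isometric (X : Type) (d : X -> X -> R) (K L : R)
  (alpha : R -> X) : Prop :=
  forall p, on_circle L p ->
    d (alpha p) (alpha (antipode L p)) >= (1 / K) * (L / 2).

Definition strongly_shortcut (X : Type) (d : X -> X -> R) (Rr : R) : Prop :=
  exists K : R, 1 < K /\ exists M : R,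
    forall (L : R) (alpha : R -> X), 0 < L ->
      is_rough_circle d Rr L alpha -> almost_isometric d K L alpha -> L <= M.

(** Ultrafilters on nat, given by their family of large sets. *)
Definition ultrafilter (U : (nat -> Prop) -> Prop) : Prop :=
  U (fun _ => True) /\
  ~ U (fun _ => False) /\
  (forall A B : nat -> Prop, U A -> (forall n, A n -> B n) -> U B) /\
  (forall A B : nat -> Prop, U A -> U B -> U (fun n => A n /\ B n)) /\
  (forall A : nat -> Prop, U A \/ U (fun n => ~ A n)).

Definition nonprincipal_ultrafilter (U : (nat -> Prop) -> Prop) : Prop :=
  ultrafilter U /\ forall k : nat, ~ U (fun n => n = k).

Definition tends_to_infinity (s : nat -> R) : Prop :=
  forall M : R, exists N : nat, forall m, (N <= m)%nat -> M <= s m.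

Definition is_ulim (U : (nat -> Prop) -> Prop) (a : nat -> R) (l : R) : Prop :=
  forall eps, 0 < eps -> U (fun m => Rabs (a m - l) < eps).

Definition ulim (U : (nat -> Prop) -> Prop) (a : nat -> R) : R :=
  epsilon (inhabits 0) (fun l => is_ulim U a l).

Section Cone.
Variables (X : Type) (d : X -> X -> R) (U : (nat -> Prop) -> Prop)
  (b : nat -> X) (s : nat -> R).

Definition cone_seq : Type :=
  { x : nat -> X | exists C : R, forall m, Rabs (d (x m) (b m) / s m) <= C }.

Definition cone_pdist (x y : cone_seq) : R :=
  ulim U (fun m => d (proj1_sig x m) (proj1_sig y m) / s m).

(** metric quotient: classes of sequences at pseudodistance 0 *)
Definition asymptotic_cone : Type :=
  { P : cone_seq -> Prop | exists x : cone_seq, P = (fun y => cone_pdist x y = 0) }.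

Definition cone_rep (P : asymptotic_cone) : cone_seq :=
  proj1_sig (constructive_indefinite_description _ (proj2_sig P)).

Definition cone_dist (P Q : asymptotic_cone) : R :=
  cone_pdist (cone_rep P) (cone_rep Q).
End Cone.

(* Put K' := 4 / (3 + 1/K) and let a 1/K'-almost isometric circle of length L
   in the cone be sampled at 2h equally spaced points.  For U-most m, with s_m
   as large as we like, representatives of the samples form a closed 2h-gon in
   X whose sides are at most about s_m L / 2h and whose opposite vertices are
   at least about s_m (3 + 1/K) L / 8 apart.  Joining consecutive vertices by
   rough geodesics gives an R-circle in X of length about s_m L which, once h
   and s_m are large, is 1/K-almost isometric.  These lengths are unbounded,
   contradicting the strong shortcut property of X, so the cone has no
   1/K'-almost isometric circles at all. *)

From Stdlib Require Import Reals Lra Lia ClassicalEpsilon Classical.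
Open Scope R_scope.

Lemma Rabs_le_inv {x C : R} : Rabs x <= C -> - C <= x <= C.
Proof. unfold Rabs; destruct Rcase_abs; lra. Qed.

Lemma Rinv_lt_1 (K : R) : 1 < K -> 0 < / K < 1.
Proof.
  intros HK; split; [apply Rinv_0_lt_compat; lra|].
  rewrite <- Rinv_1; apply Rinv_lt_contravar; lra.
Qed.

Lemma Rmult_eventually_gt (a g : R) :
  0 < g -> exists S0, 0 < S0 /\ forall sigma, S0 <= sigma -> a < sigma * g.
Proof.
  intros Hg. exists (Rabs a / g + 1). split.
  - assert (0 <= Rabs a / g)
      by (apply Rmult_le_pos; [apply Rabs_pos|left; apply Rinv_0_lt_compat, Hg]).
    lra.
  - intros sigma Hsigma. pose proof (Rle_abs a).
    apply Rmult_le_compat_r with (r := g) in Hsigma; [|lra].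
    replace ((Rabs a / g + 1) * g) with (Rabs a + g) in Hsigma by (field; lra). lra.
Qed.

Lemma Rdiv_close_bounds (y S D eps : R) :
  0 < S -> Rabs (y / S - D) < eps -> S * (D - eps) <= y <= S * (D + eps).
Proof.
  intros HS Hy; apply Rabs_def2 in Hy.
  replace y with (S * (y / S)) by (field; lra).
  split; apply Rmult_le_compat_l; lra.
Qed.

Section Ultrafilter.
Context {U : (nat -> Prop) -> Prop} (hU : ultrafilter U).

Lemma ultrafilter_mono {A B : nat -> Prop} : U A -> (forall n, A n -> B n) -> U B.
Proof. destruct hU as (_ & _ & h & _). apply h. Qed.

Lemma ultrafilter_and {A B : nat -> Prop} : U A -> U B -> U (fun n => A n /\ B n).
Proof. destruct hU as (_ & _ & _ & h & _). apply h. Qed.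

Lemma ultrafilter_all (A : nat -> Prop) : (forall n, A n) -> U A.
Proof. destruct hU as (hT & _). intros HA. apply (ultrafilter_mono hT). auto. Qed.

Lemma ultrafilter_exists {A : nat -> Prop} : U A -> exists n, A n.
Proof.
  intros HA; apply NNPP; intros Hno.
  destruct hU as (_ & hF & _). apply hF, (ultrafilter_mono HA).
  intros n Hn; apply Hno; eauto.
Qed.

Lemma ultrafilter_compl {A : nat -> Prop} : ~ U A -> U (fun n => ~ A n).
Proof. destruct hU as (_ & _ & _ & _ & h). destruct (h A); tauto. Qed.

Lemma ultrafilter_forall_lt (N : nat) (A : nat -> nat -> Prop) :
  (forall i, (i < N)%nat -> U (A i)) ->
  U (fun m => forall i, (i < N)%nat -> A i m).
Proof.
  induction N as [|N IH]; intros HA.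
  - apply ultrafilter_all; intros; lia.
  - apply (ultrafilter_mono (ultrafilter_and (IH (fun i Hi => HA i ltac:(lia)))
                                             (HA N ltac:(lia)))).
    intros m [Hlt HN] i Hi.
    destruct (Nat.eq_dec i N) as [->|Hne]; [exact HN|apply Hlt; lia].
Qed.

(* The ultralimit is the supremum of the [t] such that [t <= a m] for U-most [m]. *)
Lemma is_ulim_exists {a : nat -> R} {C : R} :
  (forall m, Rabs (a m) <= C) -> exists l, is_ulim U a l.
Proof.
  intros HC.
  set (E := fun t => U (fun m => t <= a m)).
  assert (HE : E (- C)).
  { apply ultrafilter_all; intros m. apply (Rabs_le_inv (HC m)). }
  assert (HEb : bound E).
  { exists C; intros t Ht. destruct (ultrafilter_exists Ht) as [m Hm].
    pose proof (Rabs_le_inv (HC m)); lra. }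
  destruct (completeness E HEb (ex_intro _ _ HE)) as [l [Hub Hlub]].
  exists l; intros eps Heps.
  assert (Hbelow : exists t, E t /\ l - eps / 2 < t).
  { apply NNPP; intros Hno. enough (l <= l - eps / 2) by lra.
    apply Hlub; intros t Ht. apply Rnot_lt_le; intros Hlt; eauto. }
  destruct Hbelow as [t [Ht Htl]].
  assert (Habove : ~ E (l + eps / 2)) by (intros H; specialize (Hub _ H); lra).
  apply ultrafilter_compl in Habove.
  apply (ultrafilter_mono (ultrafilter_and Ht Habove)); intros m [H1 H2].
  apply Rabs_def1; lra.
Qed.

Lemma ulim_spec {a : nat -> R} {C : R} :
  (forall m, Rabs (a m) <= C) -> is_ulim U a (ulim U a).
Proof. intros HC. unfold ulim. apply epsilon_spec. exact (is_ulim_exists HC). Qed.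

End Ultrafilter.

Lemma nonprincipal_ultrafilter_tail {U : (nat -> Prop) -> Prop}
  (hU : nonprincipal_ultrafilter U) (N : nat) : U (fun m => (N <= m)%nat).
Proof.
  destruct hU as [hU hnp].
  assert (Hinit : ~ U (fun m => (m < N)%nat)).
  { induction N as [|N IH]; intros H.
    - destruct (ultrafilter_exists hU H); lia.
    - apply IH, (ultrafilter_mono hU (ultrafilter_and hU H
                   (ultrafilter_compl hU (hnp N)))).
      intros m [H1 H2]; lia. }
  apply (ultrafilter_mono hU (ultrafilter_compl hU Hinit)); lia.
Qed.

Section Metric.
Context {X : Type} {d : X -> X -> R} (hmetric : is_metric d).

Lemma metric_ge0 (x y : X) : 0 <= d x y.
Proof. apply hmetric. Qed.

Lemma metric_xx (x : X) : d x x = 0.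
Proof. apply hmetric; reflexivity. Qed.

Lemma metric_sym (x y : X) : d x y = d y x.
Proof. apply hmetric. Qed.

Lemma metric_triangle (x y z : X) : d x z <= d x y + d y z.
Proof. apply hmetric. Qed.

End Metric.

Section Polygon.
Context {X : Type} {d : X -> X -> R} {Rr : R}.
Hypotheses (hmetric : is_metric d) (hR : 0 <= Rr) (hgeod : rough_geodesic d Rr).

Definition geod (x1 x2 : X) : R -> X :=
  proj1_sig (constructive_indefinite_description _ (hgeod x1 x2)).

Lemma geod_start (x1 x2 : X) : geod x1 x2 0 = x1.
Proof. exact (proj1 (proj2_sig (constructive_indefinite_description _ (hgeod x1 x2)))). Qed.

Lemma geod_end (x1 x2 : X) : geod x1 x2 (d x1 x2) = x2.
Proof.
  exact (proj1 (proj2 (proj2_sig (constructive_indefinite_description _ (hgeod x1 x2))))).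
Qed.

Lemma geod_dist_le (x1 x2 : X) (p q : R) :
  0 <= p <= d x1 x2 -> 0 <= q <= d x1 x2 ->
  d (geod x1 x2 p) (geod x1 x2 q) <= Rabs (p - q) + Rr.
Proof.
  intros Hp Hq.
  pose proof (proj2 (proj2 (proj2_sig (constructive_indefinite_description _
    (hgeod x1 x2)))) p q Hp Hq) as H.
  apply Rabs_le_inv in H; unfold geod; lra.
Qed.

Variables (n : nat) (x : nat -> X).
Hypothesis hper : forall j, x (j + n)%nat = x j.

Definition side (j : nat) : R := d (x j) (x (S j)).

(* Each side is traversed only after a pause of length [Rr] at its initial
   vertex: then the distance back to that vertex is at most the elapsed length,
   so a path through several sides costs [Rr] only once. *)
Fixpoint vertex_pos (i : nat) : R :=
  match i with O => 0 | S i => vertex_pos i + (side i + Rr) end.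

Definition perimeter : R := vertex_pos n.

Lemma vertex_pos_S (i : nat) : vertex_pos (S i) = vertex_pos i + side i + Rr.
Proof. simpl; ring. Qed.

Lemma vertex_pos_le (a c : nat) : (a <= c)%nat -> vertex_pos a <= vertex_pos c.
Proof.
  induction 1 as [|c _ IH]; [lra|].
  rewrite vertex_pos_S. pose proof (metric_ge0 hmetric (x c) (x (S c))).
  unfold side; lra.
Qed.

Lemma side_periodic (j : nat) : side (j + n) = side j.
Proof. unfold side. rewrite hper, <- plus_Sn_m, hper. reflexivity. Qed.

Lemma vertex_pos_periodic (a : nat) : vertex_pos (a + n) = vertex_pos a + perimeter.
Proof.
  induction a as [|a IH]; [simpl; unfold perimeter; ring|].
  rewrite plus_Sn_m, !vertex_pos_S, IH, side_periodic; ring.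
Qed.

Lemma dist_vertices_le (a c : nat) :
  (a <= c)%nat -> d (x a) (x c) <= vertex_pos c - vertex_pos a.
Proof.
  induction 1 as [|c _ IH]; [rewrite (metric_xx hmetric); lra|].
  rewrite vertex_pos_S.
  pose proof (metric_triangle hmetric (x a) (x c) (x (S c))). unfold side in *; lra.
Qed.

Definition edge_path (i : nat) (t : R) : X :=
  if Rlt_dec t (vertex_pos i + Rr) then x i
  else geod (x i) (x (S i)) (t - vertex_pos i - Rr).

Definition on_edge (i : nat) (t : R) : Prop :=
  vertex_pos i <= t < vertex_pos (S i).

Lemma edge_path_dist_start (i : nat) (t : R) :
  on_edge i t -> d (edge_path i t) (x i) <= t - vertex_pos i.
Proof.
  unfold on_edge, edge_path, side; rewrite vertex_pos_S; intros Ht.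
  destruct (Rlt_dec t (vertex_pos i + Rr)); [rewrite (metric_xx hmetric); lra|].
  rewrite <- (geod_start (x i) (x (S i))) at 2.
  eapply Rle_trans; [apply geod_dist_le; unfold side in *; lra|].
  rewrite Rminus_0_r, Rabs_right; lra.
Qed.

Lemma edge_path_dist_end (i : nat) (t : R) :
  on_edge i t -> d (edge_path i t) (x (S i)) <= vertex_pos (S i) - t + Rr.
Proof.
  unfold on_edge, edge_path; rewrite vertex_pos_S; intros Ht.
  destruct (Rlt_dec t (vertex_pos i + Rr)); [unfold side; lra|].
  rewrite <- (geod_end (x i) (x (S i))) at 2.
  eapply Rle_trans; [apply geod_dist_le; unfold side in *; lra|].
  rewrite Rabs_left1; unfold side in *; lra.
Qed.

Lemma edge_path_dist_same (i : nat) (p q : R) :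
  on_edge i p -> on_edge i q ->
  d (edge_path i p) (edge_path i q) <= Rabs (p - q) + Rr.
Proof.
  unfold on_edge, edge_path; rewrite vertex_pos_S; intros Hp Hq.
  pose proof (Rle_abs (p - q)); pose proof (Rabs_pos (p - q)).
  pose proof (Rle_abs (- (p - q))) as Hneg; rewrite Rabs_Ropp in Hneg.
  destruct (Rlt_dec p (vertex_pos i + Rr)), (Rlt_dec q (vertex_pos i + Rr)).
  - rewrite (metric_xx hmetric); lra.
  - rewrite <- (geod_start (x i) (x (S i))) at 1.
    eapply Rle_trans; [apply geod_dist_le; unfold side in *; lra|].
    rewrite Rminus_0_l, Rabs_Ropp, Rabs_right; lra.
  - rewrite <- (geod_start (x i) (x (S i))) at 2.
    eapply Rle_trans; [apply geod_dist_le; unfold side in *; lra|].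
    rewrite Rminus_0_r, Rabs_right; lra.
  - eapply Rle_trans; [apply geod_dist_le; unfold side in *; lra|].
    replace (p - vertex_pos i - Rr - (q - vertex_pos i - Rr)) with (p - q) by ring.
    lra.
Qed.

Lemma edge_path_dist_forward (i j : nat) (t u : R) :
  (i < j)%nat -> on_edge i t -> on_edge j u ->
  d (edge_path i t) (edge_path j u) <= u - t + Rr.
Proof.
  intros Hij Ht Hu.
  pose proof (edge_path_dist_end i t Ht). pose proof (edge_path_dist_start j u Hu).
  pose proof (dist_vertices_le (S i) j Hij).
  pose proof (metric_triangle hmetric (edge_path i t) (x (S i)) (edge_path j u)).
  pose proof (metric_triangle hmetric (x (S i)) (x j) (edge_path j u)).
  rewrite (metric_sym hmetric (x j)) in *; lra.
Qed.

Lemma edge_path_periodic (i : nat) (t : R) :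
  edge_path (i + n) (t + perimeter) = edge_path i t.
Proof.
  unfold edge_path. rewrite vertex_pos_periodic, hper, <- plus_Sn_m, hper.
  destruct (Rlt_dec (t + perimeter) (vertex_pos i + perimeter + Rr)),
           (Rlt_dec t (vertex_pos i + Rr)); try lra; auto.
  f_equal; ring.
Qed.

Lemma on_edge_periodic (i : nat) (t : R) :
  on_edge i t -> on_edge (i + n) (t + perimeter).
Proof. unfold on_edge. rewrite <- plus_Sn_m, !vertex_pos_periodic; lra. Qed.

Lemma on_edge_exists (N : nat) (t : R) :
  0 <= t < vertex_pos N -> exists i, (i < N)%nat /\ on_edge i t.
Proof.
  induction N as [|N IH]; intros Ht; [simpl in Ht; lra|].
  destruct (Rlt_dec t (vertex_pos N)) as [Hlt|Hge].
  - destruct IH as [i [Hi Hti]]; [lra|]. exists i; split; [lia|exact Hti].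
  - exists N; split; [lia|]. unfold on_edge; lra.
Qed.

Definition edge_index (t : R) : nat :=
  epsilon (inhabits 0%nat) (fun i => (i < n)%nat /\ on_edge i t).

Definition polygon (t : R) : X := edge_path (edge_index t) t.

Lemma edge_index_spec (t : R) :
  0 <= t < perimeter -> (edge_index t < n)%nat /\ on_edge (edge_index t) t.
Proof. intros Ht. unfold edge_index. apply epsilon_spec, on_edge_exists, Ht. Qed.

Lemma polygon_dist_le (p q : R) : 0 <= p <= q -> q < perimeter ->
  d (polygon p) (polygon q) <= q - p + Rr /\
  d (polygon p) (polygon q) <= perimeter - (q - p) + Rr.
Proof.
  intros Hp Hq.
  destruct (edge_index_spec p ltac:(lra)) as [Hi Hpi].
  destruct (edge_index_spec q ltac:(lra)) as [Hj Hqj].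
  unfold polygon; set (i := edge_index p) in *; set (j := edge_index q) in *.
  assert (Hij : (i <= j)%nat).
  { destruct (Nat.le_gt_cases i j) as [|Hji]; [assumption|].
    pose proof (vertex_pos_le (S j) i Hji). unfold on_edge in *; lra. }
  split.
  - destruct (Nat.eq_dec i j) as [<-|Hne].
    + eapply Rle_trans; [apply edge_path_dist_same; eassumption|].
      rewrite Rabs_left1; lra.
    + apply edge_path_dist_forward; auto; lia.
  - (* going the other way round: shift [p] by one period *)
    rewrite <- (edge_path_periodic i p), (metric_sym hmetric).
    eapply Rle_trans; [apply edge_path_dist_forward; [lia|exact Hqj|]|].
    + apply on_edge_periodic, Hpi.
    + lra.
Qed.

Lemma polygon_rough_circle : is_rough_circle d Rr perimeter polygon.
Proof.
  intros p q Hp Hq. unfold on_circle, circle_dist in *.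
  destruct (Rle_dec p q).
  - destruct (polygon_dist_le p q) as [H1 H2]; try lra.
    rewrite Rabs_left1 by lra.
    enough (d (polygon p) (polygon q) - Rr <= Rmin (- (p - q)) (perimeter - - (p - q)))
      by lra.
    apply Rmin_glb; lra.
  - destruct (polygon_dist_le q p) as [H1 H2]; try lra.
    rewrite (metric_sym hmetric), Rabs_right by lra.
    enough (d (polygon q) (polygon p) - Rr <= Rmin (p - q) (perimeter - (p - q))) by lra.
    apply Rmin_glb; lra.
Qed.

Section Antipodal.
Variables (h : nat) (l A : R).
Hypotheses (hn : n = (h + h)%nat) (hside : forall j, side j <= l)
  (hopp : forall a, A <= d (x a) (x (a + h)%nat)).

Lemma vertex_pos_add_le (a k : nat) :
  vertex_pos (a + k) - vertex_pos a <= INR k * (l + Rr).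
Proof.
  induction k as [|k IH]; [rewrite Nat.add_0_r; simpl; lra|].
  rewrite Nat.add_succ_r, vertex_pos_S, S_INR. specialize (hside (a + k)%nat); lra.
Qed.

Lemma half_perimeter_bounds (a : nat) :
  A <= vertex_pos (a + h) - vertex_pos a <= INR h * (l + Rr).
Proof.
  split; [|apply vertex_pos_add_le].
  eapply Rle_trans; [apply hopp|apply dist_vertices_le; lia].
Qed.

Lemma half_perimeter_sum (a : nat) :
  vertex_pos (a + h) - vertex_pos a + (vertex_pos (a + h + h) - vertex_pos (a + h))
  = perimeter.
Proof. rewrite <- Nat.add_assoc, <- hn, vertex_pos_periodic; ring. Qed.

Lemma perimeter_bounds : 2 * A <= perimeter <= 2 * (INR h * (l + Rr)).
Proof.
  pose proof (half_perimeter_bounds 0); pose proof (half_perimeter_bounds (0 + h)).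
  pose proof (half_perimeter_sum 0); lra.
Qed.

(* Both halves of the perimeter lie between [A] and [INR h * (l + Rr)], so the
   point at distance [perimeter / 2] from a point near [x i] lies near
   [x (i + h)], up to the slack [INR h * (l + Rr) - A]. *)
Lemma edge_path_dist_opposite (i k : nat) (t u : R) :
  on_edge i t -> on_edge k u -> u - t = perimeter / 2 ->
  A - 4 * (l + Rr) - (INR h * (l + Rr) - A) <= d (edge_path i t) (edge_path k u).
Proof.
  intros Ht Hu Hut.
  pose proof (edge_path_dist_start i t Ht); pose proof (edge_path_dist_start k u Hu).
  unfold on_edge in *; rewrite vertex_pos_S in Ht, Hu.
  pose proof (hside i); pose proof (hside k); pose proof (hopp i).
  pose proof (half_perimeter_bounds i); pose proof (half_perimeter_bounds (i + h)).
  pose proof (half_perimeter_sum i).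
  pose proof (metric_triangle hmetric (x i) (edge_path i t) (x k)).
  pose proof (metric_triangle hmetric (edge_path i t) (edge_path k u) (x k)).
  pose proof (metric_triangle hmetric (x i) (x k) (x (i + h)%nat)).
  rewrite (metric_sym hmetric (x i) (edge_path i t)) in *.
  assert (Hk : d (x k) (x (i + h)%nat)
               <= Rabs (vertex_pos k - vertex_pos (i + h))).
  { destruct (Nat.le_gt_cases k (i + h)) as [Hle|Hgt].
    - rewrite Rabs_minus_sym. eapply Rle_trans; [apply dist_vertices_le, Hle|apply Rle_abs].
    - rewrite (metric_sym hmetric).
      eapply Rle_trans; [apply dist_vertices_le; lia|apply Rle_abs]. }
  assert (Rabs (vertex_pos k - vertex_pos (i + h))
          <= 2 * (l + Rr) + (INR h * (l + Rr) - A) / 2) by (apply Rabs_le; lra).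
  lra.
Qed.

Lemma polygon_dist_antipode (t : R) : 0 < perimeter -> 0 <= t < perimeter ->
  A - 4 * (l + Rr) - (INR h * (l + Rr) - A)
  <= d (polygon t) (polygon (antipode perimeter t)).
Proof.
  intros HL Ht. destruct (edge_index_spec t Ht) as [_ Hi].
  unfold antipode, polygon at 1. destruct (Rlt_dec t (perimeter / 2)).
  - destruct (edge_index_spec (t + perimeter / 2) ltac:(lra)) as [_ Hk].
    apply edge_path_dist_opposite; auto; ring.
  - destruct (edge_index_spec (t - perimeter / 2) ltac:(lra)) as [_ Hk].
    unfold polygon; rewrite <- (edge_path_periodic (edge_index (t - perimeter / 2))).
    apply edge_path_dist_opposite; [exact Hi|apply on_edge_periodic, Hk|lra].
Qed.

Lemma polygon_almost_isometric (K : R) : 0 < A -> 0 < K ->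
  / K * (INR h * (l + Rr)) <= A - 4 * (l + Rr) - (INR h * (l + Rr) - A) ->
  almost_isometric d K perimeter polygon.
Proof.
  intros HA HK Hmargin t Ht. apply Rle_ge.
  destruct perimeter_bounds as [Hlow Hup].
  eapply Rle_trans; [|apply polygon_dist_antipode; [lra|exact Ht]].
  replace (1 / K) with (/ K) by (field; lra).
  eapply Rle_trans; [|exact Hmargin].
  apply Rmult_le_compat_l; [left; apply Rinv_0_lt_compat|]; lra.
Qed.

End Antipodal.
End Polygon.

Definition sample_point (L : R) (n r : nat) : R := INR r * L / INR n.

Lemma sample_point_on_circle (L : R) (n r : nat) :
  0 < L -> (r < n)%nat -> on_circle L (sample_point L n r).
Proof.
  intros HL Hr. apply lt_INR in Hr. pose proof (pos_INR r).
  unfold on_circle, sample_point. split.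
  - apply Rmult_le_pos; [nra|]. left; apply Rinv_0_lt_compat; lra.
  - apply Rmult_lt_reg_r with (INR n); [lra|].
    unfold Rdiv; rewrite Rmult_assoc, Rinv_l by lra. nra.
Qed.

Lemma circle_dist_sample_succ (L : R) (n j : nat) : 0 < L -> (0 < n)%nat ->
  circle_dist L (sample_point L n (j mod n)) (sample_point L n (S j mod n))
  <= L / INR n.
Proof.
  intros HL Hn. pose proof (Nat.div_mod_eq j n). pose proof (Nat.mod_upper_bound j n ltac:(lia)).
  assert (HnR : 0 < INR n) by (apply lt_0_INR; lia).
  unfold circle_dist, sample_point.
  destruct (Nat.lt_ge_cases (S (j mod n)) n) as [Hlt|Hge].
  - assert (HS : S j mod n = S (j mod n))
      by (symmetry; apply Nat.mod_unique with (j / n)%nat; lia).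
    rewrite HS, S_INR. eapply Rle_trans; [apply Rmin_l|].
    replace (INR (j mod n) * L / INR n - (INR (j mod n) + 1) * L / INR n)
      with (- (L / INR n)) by (field; lra).
    rewrite Rabs_Ropp, Rabs_right; [lra|]. apply Rle_ge, Rlt_le, Rdiv_lt_0_compat; lra.
  - assert (HS : S j mod n = 0%nat)
      by (symmetry; apply Nat.mod_unique with (S (j / n)); lia).
    assert (Hlast : INR (j mod n) = INR n - 1)
      by (replace n with (S (j mod n)) at 2 by lia; rewrite S_INR; ring).
    rewrite HS, Hlast. eapply Rle_trans; [apply Rmin_r|].
    replace ((INR n - 1) * L / INR n - INR 0 * L / INR n) with (L - L / INR n)
      by (simpl; field; lra).
    assert (L / INR n <= L).
    { apply Rmult_le_reg_r with (INR n); [lra|].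
      unfold Rdiv; rewrite Rmult_assoc, Rinv_l by lra.
      assert (1 <= INR n) by (apply (le_INR 1); lia). nra. }
    rewrite Rabs_right; lra.
Qed.

Lemma antipode_sample_point (L : R) (h a : nat) : 0 < L -> (0 < h)%nat ->
  antipode L (sample_point L (h + h) (a mod (h + h)))
  = sample_point L (h + h) ((a + h) mod (h + h)).
Proof.
  intros HL Hh. pose proof (Nat.div_mod_eq a (h + h)).
  pose proof (Nat.mod_upper_bound a (h + h) ltac:(lia)).
  assert (HhR : 0 < INR h) by (apply lt_0_INR; lia).
  unfold antipode, sample_point; rewrite plus_INR.
  destruct (Nat.lt_ge_cases (a mod (h + h)) h) as [Hlt|Hge].
  - assert (Hm : (a + h) mod (h + h) = (a mod (h + h) + h)%nat)
      by (symmetry; apply Nat.mod_unique with (a / (h + h))%nat; lia).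
    apply lt_INR in Hlt.
    destruct (Rlt_dec (INR (a mod (h + h)) * L / (INR h + INR h)) (L / 2)) as [_|Hn].
    + rewrite Hm, plus_INR; field; lra.
    + exfalso; apply Hn. apply Rmult_lt_reg_r with (INR h + INR h); [lra|].
      unfold Rdiv; rewrite Rmult_assoc, Rinv_l by lra. nra.
  - assert (Hm : (a + h) mod (h + h) = (a mod (h + h) - h)%nat)
      by (symmetry; apply Nat.mod_unique with (S (a / (h + h))); lia).
    rewrite Hm, minus_INR by exact Hge. apply le_INR in Hge.
    destruct (Rlt_dec (INR (a mod (h + h)) * L / (INR h + INR h)) (L / 2)) as [Hn|_].
    + exfalso. apply (Rmult_lt_compat_r (INR h + INR h)) in Hn; [|lra].
      unfold Rdiv in Hn; rewrite Rmult_assoc, Rinv_l in Hn by lra. nra.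
    + field; lra.
Qed.

Section Cone.
Context {X : Type} {d : X -> X -> R} {U : (nat -> Prop) -> Prop} {b : nat -> X}
  {s : nat -> R}.
Hypotheses (hmetric : is_metric d) (hU : nonprincipal_ultrafilter U)
  (hs : tends_to_infinity s).

Definition cone_point_seq (P : asymptotic_cone d U b s) : nat -> X :=
  proj1_sig (cone_rep P).

Lemma cone_seq_dist_bounded (x y : cone_seq d b s) :
  exists C, forall m, Rabs (d (proj1_sig x m) (proj1_sig y m) / s m) <= C.
Proof.
  destruct (proj2_sig x) as [Cx Hx]; destruct (proj2_sig y) as [Cy Hy].
  exists (Cx + Cy); intros m.
  specialize (Hx m); specialize (Hy m); unfold Rdiv in *.
  rewrite Rabs_mult in *.
  pose proof (metric_triangle hmetric (proj1_sig x m) (b m) (proj1_sig y m)).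
  rewrite (metric_sym hmetric (b m)) in *.
  rewrite !Rabs_right in * by apply Rle_ge, metric_ge0, hmetric.
  pose proof (Rabs_pos (/ s m)). nra.
Qed.

Lemma cone_dist_is_ulim (P Q : asymptotic_cone d U b s) :
  is_ulim U (fun m => d (cone_point_seq P m) (cone_point_seq Q m) / s m)
    (cone_dist P Q).
Proof.
  destruct (cone_seq_dist_bounded (cone_rep P) (cone_rep Q)) as [C HC].
  exact (ulim_spec (proj1 hU) HC).
Qed.

Lemma cone_dist_sample (pts : nat -> asymptotic_cone d U b s) (n : nat) (eps S0 : R) :
  0 < eps -> exists m, S0 <= s m /\
    forall r r', (r < n)%nat -> (r' < n)%nat ->
      Rabs (d (cone_point_seq (pts r) m) (cone_point_seq (pts r') m) / s m
            - cone_dist (pts r) (pts r')) < eps.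
Proof.
  intros Heps. destruct (hs S0) as [N HN].
  assert (Hall := ultrafilter_forall_lt (proj1 hU) n _ (fun r _ =>
    ultrafilter_forall_lt (proj1 hU) n _ (fun r' _ =>
      cone_dist_is_ulim (pts r) (pts r') eps Heps))).
  destruct (ultrafilter_exists (proj1 hU) (ultrafilter_and (proj1 hU) Hall
              (nonprincipal_ultrafilter_tail hU N))) as [m [Hm HmN]].
  exists m; split; [apply HN, HmN|]. intros r r' Hr Hr'. exact (Hm r Hr r' Hr').
Qed.

Lemma cone_circle_sample (K' L S0 eps : R) (h : nat)
  (alpha : R -> asymptotic_cone d U b s) :
  0 < L -> (0 < h)%nat -> 0 < eps -> 0 < S0 ->
  is_rough_circle (@cone_dist X d U b s) 0 L alpha ->
  almost_isometric (@cone_dist X d U b s) K' L alpha ->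
  exists (sigma : R) (x : nat -> X), S0 <= sigma /\
    (forall j, x (j + (h + h))%nat = x j) /\
    (forall j, d (x j) (x (S j)) <= sigma * (L / INR (h + h) + eps)) /\
    (forall a, sigma * (1 / K' * (L / 2) - eps) <= d (x a) (x (a + h)%nat)).
Proof.
  intros HL Hh Heps HS0 Hcirc Hiso. set (n := (h + h)%nat).
  set (pts := fun r => alpha (sample_point L n r)).
  destruct (cone_dist_sample pts n eps S0 Heps) as [m [Hm Hclose]].
  assert (Hsm : 0 < s m) by lra.
  assert (Hmod : forall j, (j mod n < n)%nat) by (intros; apply Nat.mod_upper_bound; lia).
  exists (s m), (fun j => cone_point_seq (pts (j mod n)) m).
  split; [exact Hm|]. split; [|split].
  - intros j. replace (j + n)%nat with (j + 1 * n)%nat by lia.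
    now rewrite Nat.Div0.mod_add.
  - intros j.
    assert (HD : cone_dist (pts (j mod n)) (pts (S j mod n)) <= L / INR n).
    { eapply Rle_trans; [apply Hcirc; apply sample_point_on_circle; auto|].
      rewrite Rplus_0_r. apply circle_dist_sample_succ; [exact HL|lia]. }
    pose proof (Rdiv_close_bounds _ _ _ _ Hsm (Hclose _ _ (Hmod j) (Hmod (S j)))).
    nra.
  - intros a.
    assert (HD : 1 / K' * (L / 2) <= cone_dist (pts (a mod n)) (pts ((a + h) mod n))).
    { apply Rge_le. unfold pts, n. rewrite <- antipode_sample_point by auto.
      apply Hiso, sample_point_on_circle; auto. }
    pose proof (Rdiv_close_bounds _ _ _ _ Hsm
                  (Hclose _ _ (Hmod a) (Hmod (a + h)%nat))).
    nra.
Qed.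

End Cone.

(* Here [2 * A] is about [sigma * L * (3 + c) / 4] and [h * (l + Rr)] about
   [sigma * L / 2], leaving a slack of [sigma * L * (1 - c) / 4] that absorbs
   the errors coming from [/ h], [eps] and [Rr]. *)
Lemma polygon_margin (c L h eps sigma Rr M : R) :
  0 < c < 1 -> 0 < L -> 0 < h -> / h <= (1 - c) / 32 -> 0 < eps ->
  eps * (2 * h + 6) <= L * (1 - c) / 16 -> 0 <= Rr ->
  (2 * h + 4) * Rr < sigma * (L * (1 - c) / 8) -> M < sigma * (L / 2) ->
  let l := sigma * (L / (2 * h) + eps) in
  let A := sigma * ((3 + c) * L / 8 - eps) in
  c * (h * (l + Rr)) <= A - 4 * (l + Rr) - (h * (l + Rr) - A) /\ M < 2 * A.
Proof.
  intros Hc HL Hh Hinv Heps Hsmall HR HRr HM l A.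
  assert (Hsigma : 0 <= sigma).
  { destruct (Rle_or_lt 0 sigma) as [|Hneg]; [assumption|].
    assert (0 < L * (1 - c) / 8) by nra. nra. }
  assert (Hl : L / (2 * h) = L * / h / 2) by (field; lra).
  assert (Hhl : h * l = sigma * (L / 2 + h * eps)) by (unfold l; field; lra).
  assert (Hgap : L * (1 - c) / 8
                 <= (1 - c) * L / 4 - 2 * (L * / h) - (6 + (1 + c) * h) * eps).
  { assert (L * / h <= L * ((1 - c) / 32)) by (apply Rmult_le_compat_l; lra).
    assert (0 <= (1 - c) * h * eps) by (apply Rmult_le_pos; [apply Rmult_le_pos|]; lra).
    lra. }
  split.
  - assert (Hexp : A - 4 * (l + Rr) - (h * (l + Rr) - A) - c * (h * (l + Rr))
                   = sigma * ((1 - c) * L / 4 - 2 * (L * / h) - (6 + (1 + c) * h) * eps)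
                     - ((1 + c) * h + 4) * Rr).
    { replace (A - 4 * (l + Rr) - (h * (l + Rr) - A) - c * (h * (l + Rr)))
        with (2 * A - 4 * l - (1 + c) * (h * l) - ((1 + c) * h + 4) * Rr) by ring.
      rewrite Hhl. unfold A, l. rewrite Hl. field; lra. }
    assert (0 <= (1 - c) * h * Rr) by (apply Rmult_le_pos; [apply Rmult_le_pos|]; lra).
    assert (sigma * (L * (1 - c) / 8) <= sigma * ((1 - c) * L / 4 - 2 * (L * / h)
              - (6 + (1 + c) * h) * eps)) by (apply Rmult_le_compat_l; lra).
    lra.
  - assert (0 <= eps * (2 * h)) by (apply Rmult_le_pos; lra).
    assert (0 < L * c) by (apply Rmult_lt_0_compat; lra).
    assert (0 <= sigma * ((3 + c) * L / 8 - eps - L / 4))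
      by (apply Rmult_le_pos; lra).
    unfold A; lra.
Qed.

Lemma cone_circle_lifts {X : Type} {d : X -> X -> R} {Rr : R}
  {U : (nat -> Prop) -> Prop} {b : nat -> X} {s : nat -> R}
  (hmetric : is_metric d) (hR : 0 <= Rr) (hgeod : rough_geodesic d Rr)
  (hU : nonprincipal_ultrafilter U) (hs : tends_to_infinity s)
  (K L M : R) (alpha : R -> asymptotic_cone d U b s) :
  1 < K -> 0 < L -> 0 <= M ->
  is_rough_circle (@cone_dist X d U b s) 0 L alpha ->
  almost_isometric (@cone_dist X d U b s) (4 / (3 + / K)) L alpha ->
  exists (L' : R) (beta : R -> X),
    M < L' /\ is_rough_circle d Rr L' beta /\ almost_isometric d K L' beta.
Proof.
  intros HK HL HM Hcirc Hiso. set (c := / K).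
  pose proof (Rinv_lt_1 K HK) as Hc; fold c in Hc.
  destruct (archimed_cor1 ((1 - c) / 32)) as [h [Hh Hh0]]; [lra|].
  assert (HhR : 0 < INR h) by (apply lt_0_INR; lia).
  set (eps := L * (1 - c) / (16 * (2 * INR h + 6))).
  assert (Heps : 0 < eps) by (apply Rdiv_lt_0_compat; nra).
  assert (Heps_small : eps * (2 * INR h + 6) = L * (1 - c) / 16)
    by (unfold eps; field; lra).
  destruct (Rmult_eventually_gt ((2 * INR h + 4) * Rr) (L * (1 - c) / 8))
    as (S1 & HS1 & Hbig1); [nra|].
  destruct (Rmult_eventually_gt M (L / 2)) as (S2 & HS2 & Hbig2); [lra|].
  destruct (cone_circle_sample hmetric hU hs (4 / (3 + c)) L (Rmax S1 S2) eps h alpha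
              HL Hh0 Heps (Rlt_le_trans _ _ _ HS1 (Rmax_l S1 S2)) Hcirc Hiso)
    as (sigma & x & HS & hper & hside & hopp).
  replace (INR (h + h)) with (2 * INR h) in hside by (rewrite plus_INR; ring).
  replace (1 / (4 / (3 + c)) * (L / 2)) with ((3 + c) * L / 8) in hopp by (field; lra).
  pose proof (Rmax_l S1 S2); pose proof (Rmax_r S1 S2).
  destruct (polygon_margin c L (INR h) eps sigma Rr M Hc HL HhR (Rlt_le _ _ Hh) Heps
              (Req_le _ _ Heps_small) hR (Hbig1 sigma ltac:(lra)) (Hbig2 sigma ltac:(lra)))
    as [Hmargin HMA].
  destruct (perimeter_bounds hmetric hR (h + h) x hper h _ _ eq_refl hside hopp)
    as [Hlow _].
  exists (@perimeter X d Rr (h + h) x), (polygon hgeod (h + h) x).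
  split; [lra|split].
  - exact (polygon_rough_circle hmetric hR hgeod (h + h) x hper).
  - apply (polygon_almost_isometric hmetric hR hgeod (h + h) x hper h _ _ eq_refl
             hside hopp K); [lra|lra|exact Hmargin].
Qed.

Theorem corollary3p12 (X : Type) (d : X -> X -> R) (Rr : R)
  (hmetric : is_metric d) (hR : 0 <= Rr)
  (hgeod : rough_geodesic d Rr) (hss : strongly_shortcut d Rr)
  (U : (nat -> Prop) -> Prop) (hU : nonprincipal_ultrafilter U)
  (b : nat -> X) (s : nat -> R) (hs : tends_to_infinity s) :
  strongly_shortcut (@cone_dist X d U b s) 0.
Proof.
  destruct hss as [K [HK [M HM]]].
  pose proof (Rinv_lt_1 K HK) as Hc.
  exists (4 / (3 + / K)); split.
  - apply Rmult_lt_reg_r with (3 + / K); [lra|].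
    unfold Rdiv; rewrite Rmult_assoc, Rinv_l by lra; lra.
  - exists 0; intros L alpha HL Hcirc Hiso; exfalso.
    destruct (cone_circle_lifts hmetric hR hgeod hU hs K L (Rabs M) alpha
                HK HL (Rabs_pos M) Hcirc Hiso) as (L' & beta & HL' & Hbeta & Hbiso).
    pose proof (Rle_abs M); pose proof (Rabs_pos M).
    pose proof (HM L' beta ltac:(lra) Hbeta Hbiso); lra.
Qed.
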